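(* Let $n\ge 1$, $b\in\mathbb{R}^n$, and let $A\in\mathbb{R}^{n\times n}$ be symmetric with all eigenvalues $\lambda_i$ satisfying $0<\lambda_i<2$, $i=1,\dots,n$. Define $g(x)=x-(Ax-b)$ and $f(x)=g(x)-x=-(Ax-b)$. Let $\bar x_k,\bar y_k\in\mathbb{R}^n$ be arbitrary vectors with $\bar y_k\neq\bar x_k$ (so that $f(\bar y_k)-f(\bar x_k)\neq 0$), and define $$\beta_k^\ast=-\frac{\langle f(\bar y_k)-f(\bar x_k),\,f(\bar x_k)\rangle}{\|f(\bar y_k)-f(\bar x_k)\|^2},$$ $$x^0_{k+1}=\bar x_k+\beta_k^\ast(\bar y_k-\bar x_k),\qquad x^1_{k+1}=g(\bar x_k)+\beta_k^\ast\big(g(\bar y_k)-g(\bar x_k)\big).$$ If $f(x^0_{k+1})\neq 0$, then $\|f(x^1_{k+1})\|<\|f(x^0_{k+1})\|$.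
   Context: $\|\cdot\|$ denotes the Euclidean norm on $\mathbb{R}^n$ and $\langle x,y\rangle=x^\intercal y$ the standard inner product. In the paper, $\bar x_k,\bar y_k$ arise as the affine combinations $\sum_i\alpha_i x_{k-m_k+i}$ and $\sum_i\alpha_i g(x_{k-m_k+i})$ (with $\sum_i\alpha_i=1$) computed in an Anderson acceleration step, but the statement holds for arbitrary vectors. *)

From HB Require Import structures.
From mathcomp Require Import all_boot all_order all_algebra.
From mathcomp Require Import reals.
Set Implicit Arguments. Unset Strict Implicit. Unset Printing Implicit Defensive.
Import Order.TTheory GRing.Theory Num.Theory.
Local Open Scope ring_scope.

Definition dotv (R : realType) (n : nat) (x y : 'cV[R]_n) : R :=
  (x^T *m y) 0 0.

Definition enorm (R : realType) (n : nat) (x : 'cV[R]_n) : R :=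
  Num.sqrt (dotv x x).

Definition gmap (R : realType) (n : nat) (A : 'M[R]_n) (b : 'cV[R]_n)
  (x : 'cV[R]_n) : 'cV[R]_n := x - (A *m x - b).

Definition fmap (R : realType) (n : nat) (A : 'M[R]_n) (b : 'cV[R]_n)
  (x : 'cV[R]_n) : 'cV[R]_n := gmap A b x - x.

(* The heart of the matter is that, writing C := 1 - A, the map f satisfies
   f(g z) = C f(z), and x1 = g(x0) because g is affine.  So the claim is
   ||C v|| < ||v|| for v = f(x0) != 0, i.e. that the symmetric matrix C, whose
   spectrum lies in (-1, 1), is a strict contraction.  Rather than diagonalising
   C, we argue variationally: the supremum mu of the Rayleigh quotient of
   C^2 is an eigenvalue of C^2 (otherwise mu - C^2 would be positive definite
   and mu could be lowered), and an eigenvalue s^2 of C^2 forces s or -s to be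
   an eigenvalue of C, whence mu = s^2 < 1.  The value of beta plays no role,
   so neither does the hypothesis ybar != xbar. *)
From HB Require Import structures.
From mathcomp Require Import all_boot all_order all_algebra.
From mathcomp Require Import classical_sets reals.
From mathcomp Require Import ring lra.
Import Order.TTheory GRing.Theory Num.Theory.
Local Open Scope ring_scope.
Set Implicit Arguments. Unset Strict Implicit. Unset Printing Implicit Defensive.

Section EigenvalueFacts.
Variables (F : fieldType) (n : nat).
Implicit Types (M C : 'M[F]_n) (a : F).

Lemma eigenvalue_unitmx M a : eigenvalue M a = (a%:M - M \notin unitmx).
Proof.
by rewrite /eigenvalue /eigenspace kermx_eq0 -opprB -row_free_unit /row_free mxrank_opp.
Qed.

Lemma eigenvalue_1submx M a : eigenvalue (1%:M - M) a -> eigenvalue M (1 - a).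
Proof.
case/eigenvalueP=> w wC nw; apply/eigenvalueP; exists w => //.
by rewrite scalerBl scale1r -wC mulmxBr mulmx1 opprB addrC subrK.
Qed.

Lemma eigenvalue_mulmx_sqr C a :
  eigenvalue (C *m C) (a ^+ 2) -> eigenvalue C a \/ eigenvalue C (- a).
Proof.
case/eigenvalueP=> w wCC nw; set u := w *m (C - a%:M).
have [u0|nu] := eqVneq u 0; [left | right]; apply/eigenvalueP.
  exists w => //; apply/eqP; rewrite -subr_eq0 -mul_mx_scalar -mulmxBr.
  exact/eqP.
exists u => //.
rewrite /u mulmxBr mulmxBl -mulmxA wCC !mul_mx_scalar -scalemxAl.
by rewrite scalerBr !scalerA mulNr !scaleNr opprK -expr2 addrC.
Qed.

End EigenvalueFacts.

Section RayleighQuotient.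
Variables (R : realType) (n : nat).
Implicit Types (x y : 'cV[R]_n) (M N : 'M[R]_n).

Definition qform M x y : R := (x^T *m M *m y) 0 0.

Definition mx_abs_sum M : R := \sum_i \sum_j `|M i j|.

Lemma dotvE x y : dotv x y = \sum_i x i 0 * y i 0.
Proof. by rewrite /dotv mxE; apply: eq_bigr => i _; rewrite mxE. Qed.

Lemma dotv_ge0 x : 0 <= dotv x x.
Proof. by rewrite dotvE sumr_ge0 // => i _; rewrite -expr2 sqr_ge0. Qed.

Lemma dotv_gt0 x : x != 0 -> 0 < dotv x x.
Proof.
move=> nx; rewrite lt_neqAle dotv_ge0 andbT eq_sym; apply: contra nx.
rewrite dotvE psumr_eq0; last by move=> i _; rewrite -expr2 sqr_ge0.
move=> /allP x0; apply/eqP/matrixP => i j; rewrite (ord1 j) mxE.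
by have /= := x0 i (mem_index_enum i); rewrite mulf_eq0 orbb => /eqP.
Qed.

Lemma sqr_coord_le_dotv x i : x i 0 ^+ 2 <= dotv x x.
Proof.
rewrite dotvE (bigD1 i) //= expr2 lerDl sumr_ge0 // => k _.
by rewrite -expr2 sqr_ge0.
Qed.

Lemma mx_abs_sum_ge0 M : 0 <= mx_abs_sum M.
Proof. by rewrite sumr_ge0 // => i _; rewrite sumr_ge0. Qed.

Lemma qformE M x y : qform M x y = \sum_i \sum_j x i 0 * M i j * y j 0.
Proof.
rewrite /qform mxE; under eq_bigr => j _ do rewrite mxE big_distrl /=.
rewrite exchange_big /=; apply: eq_bigr => i _; apply: eq_bigr => j _.
by rewrite mxE.
Qed.

Lemma qform_le_abs_sum M x : qform M x x <= mx_abs_sum M * dotv x x.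
Proof.
rewrite qformE mulr_suml; apply: ler_sum => i _; rewrite mulr_suml.
apply: ler_sum => j _; rewrite [_ * M i j]mulrC -mulrA.
apply: le_trans (ler_norm _) _; rewrite normrM ler_wpM2l //.
(* |ab| <= (a^2 + b^2) / 2 <= |x|^2 *)
have := sqr_coord_le_dotv x i; have := sqr_coord_le_dotv x j.
have := sqr_ge0 (`|x i 0| - `|x j 0|).
rewrite normrM sqrrB -[x i 0 ^+ 2]real_normK ?num_real // -[x j 0 ^+ 2]real_normK ?num_real //.
lra.
Qed.

Lemma qformC M x y : M^T = M -> qform M x y = qform M y x.
Proof.
move=> sM; have -> : qform M y x = (y^T *m M *m x)^T 0 0 by rewrite mxE.
by rewrite !trmx_mul trmxK sM mulmxA.
Qed.

Lemma qformDZ M x y (t : R) :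
  qform M (x + t *: y) (x + t *: y) =
  qform M x x + t * qform M x y + t * qform M y x + t ^+ 2 * qform M y y.
Proof.
rewrite /qform; have -> : (x + t *: y)^T = x^T + t *: y^T.
  by rewrite raddfD /= linearZ.
rewrite !mulmxDl !mulmxDr -!scalemxAl -!scalemxAr.
by rewrite !scalerA !mxE; ring.
Qed.

Lemma qform_scalar_submx (a : R) M x :
  qform (a%:M - M) x x = a * dotv x x - qform M x x.
Proof.
by rewrite /qform /dotv mulmxBr mulmxBl mul_mx_scalar -scalemxAl !mxE.
Qed.

Lemma psd_unitmx_coercive N : N^T = N -> N \in unitmx ->
  (forall x, 0 <= qform N x x) ->
  exists2 K : R, 0 < K & forall x, dotv x x <= K * qform N x x.
Proof.
move=> sN uN psdN; set K := mx_abs_sum (invmx N).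
have K0 : 0 <= K := mx_abs_sum_ge0 _.
exists (K + 1); first by rewrite ltr_pwDr.
move=> x; set y := invmx N *m x; set t := (K + 1)^-1.
have t0 : 0 < t by rewrite invr_gt0 ltr_pwDr.
have tK : t * (K + 1) = 1 by rewrite mulVf // gt_eqF // ltr_pwDr.
have Nxy : qform N x y = dotv x x by rewrite /qform /dotv -mulmxA mulKVmx.
have Nyx : qform N y x = dotv x x by rewrite -qformC.
have Nyy : qform N y y = qform (invmx N) x x.
  by rewrite /qform -mulmxA mulKVmx // trmx_mul trmx_inv sN.
have := psdN (x + (- t) *: y); rewrite qformDZ Nxy Nyx Nyy sqrrN.
have := qform_le_abs_sum (invmx N) x; rewrite -/K.
have := dotv_ge0 x; move: (qform _ x x) (qform _ x x) (dotv x x).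
move=> q Q S S0 QS psd_xty.
(* with t = 1/(K+1): 0 <= q - 2tS + t^2 Q <= q - 2tS + t^2 K S = q - tS - t^2 S *)
have tQ : t ^+ 2 * Q <= t ^+ 2 * (K * S) by rewrite ler_wpM2l ?sqr_ge0.
have tKS : t ^+ 2 * (K * S) = t * S - t ^+ 2 * S by rewrite -[t * S]mul1r -tK; ring.
have tS : 0 <= t ^+ 2 * S by rewrite mulr_ge0 ?sqr_ge0.
have tSq : t * S <= q by lra.
have := ler_wpM2l (addr_ge0 K0 ler01) tSq.
by rewrite mulrA (mulrC (K + 1)) tK mul1r.
Qed.

Definition rayleigh M : set R :=
  [set r | exists2 x, x != 0 & r = qform M x x / dotv x x].

Definition rayleigh_sup M : R := sup (rayleigh M).

Lemma rayleigh_ubound M : has_ubound (rayleigh M).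
Proof.
exists (mx_abs_sum M) => _ [x nx ->].
by rewrite ler_pdivrMr ?dotv_gt0 // qform_le_abs_sum.
Qed.

Lemma qform_le_rayleigh_sup M x : qform M x x <= rayleigh_sup M * dotv x x.
Proof.
have [->|nx] := eqVneq x 0; first by rewrite /qform mulmx0 mxE /dotv mulmx0 mxE mulr0.
rewrite -ler_pdivrMr ?dotv_gt0 //; apply: (ub_le_sup (rayleigh_ubound M)).
by exists x.
Qed.

Lemma rayleigh_sup_eigenvalue M : (0 < n)%N -> M^T = M ->
  eigenvalue M (rayleigh_sup M).
Proof.
move=> n_gt0 sM; set mu := rayleigh_sup M; set N := mu%:M - M.
rewrite eigenvalue_unitmx; apply/negP => uN.
have sN : N^T = N by rewrite /N raddfB /= tr_scalar_mx sM.
have psdN x : 0 <= qform N x x.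
  by rewrite qform_scalar_submx subr_ge0 qform_le_rayleigh_sup.
have [K K0 coerN] := psd_unitmx_coercive sN uN psdN.
have one0 : (const_mx 1 : 'cV[R]_n) != 0.
  apply/eqP => /matrixP /(_ (Ordinal n_gt0) 0); rewrite !mxE => /eqP.
  by rewrite oner_eq0.
have : mu <= mu - K^-1.
  apply: ge_sup; first by eexists; exists (const_mx 1).
  move=> _ [x nx ->]; rewrite ler_pdivrMr ?dotv_gt0 //.
  have : K^-1 * dotv x x <= mu * dotv x x - qform M x x.
    by rewrite ler_pdivrMl // -qform_scalar_submx.
  by rewrite mulrBl; lra.
have : 0 < K^-1 by rewrite invr_gt0.
lra.
Qed.

End RayleighQuotient.

Lemma sym_mx_contraction (R : realType) (n : nat) (C : 'M[R]_n) (x : 'cV[R]_n) :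
  (0 < n)%N -> C^T = C -> (forall l : R, eigenvalue C l -> -1 < l < 1) ->
  x != 0 -> dotv (C *m x) (C *m x) < dotv x x.
Proof.
move=> n_gt0 sC specC nx; set M := C *m C.
have CxE : dotv (C *m x) (C *m x) = qform M x x.
  by rewrite /dotv /qform trmx_mul sC !mulmxA.
have x0 := dotv_gt0 nx; have Mx := qform_le_rayleigh_sup M x.
set mu := rayleigh_sup M in Mx *.
have mu0 : 0 <= mu by have := dotv_ge0 (C *m x); rewrite CxE; nra.
have eigM : eigenvalue M mu.
  by apply: rayleigh_sup_eigenvalue => //; rewrite /M trmx_mul sC.
set s := Num.sqrt mu; have s0 : 0 <= s := sqrtr_ge0 mu.
have smu : s ^+ 2 = mu := sqr_sqrtr mu0.
have eigCs : eigenvalue C s \/ eigenvalue C (- s).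
  by apply: eigenvalue_mulmx_sqr; rewrite smu.
have s1 : s < 1 by case: eigCs => /specC /andP[]; lra.
have mu1 : mu < 1 by rewrite -smu; nra.
by rewrite CxE; nra.
Qed.

Lemma gmap_lerp (R : realType) (n : nat) (A : 'M[R]_n) (b x y : 'cV[R]_n) (c : R) :
  gmap A b x + c *: (gmap A b y - gmap A b x) = gmap A b (x + c *: (y - x)).
Proof.
rewrite /gmap mulmxDr -scalemxAr mulmxBr.
move: (A *m x) (A *m y) => Ax Ay; apply/matrixP => i j; rewrite !mxE; ring.
Qed.

Lemma fmap_gmap (R : realType) (n : nat) (A : 'M[R]_n) (b z : 'cV[R]_n) :
  fmap A b (gmap A b z) = (1%:M - A) *m fmap A b z.
Proof.
rewrite /fmap /gmap !mulmxBl mul1mx !mulmxBr.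
move: (A *m (A *m z)) (A *m z) (A *m b) => AAz Az Ab.
apply/matrixP => i j; rewrite !mxE; ring.
Qed.

Theorem theorem1 (R : realType) (n : nat) (hn : (0 < n)%N)
  (A : 'M[R]_n) (b : 'cV[R]_n)
  (hsym : A^T = A)
  (heig : forall l : R, eigenvalue A l -> 0 < l < 2)
  (xbar ybar : 'cV[R]_n) (hxy : ybar != xbar) :
  let df := fmap A b ybar - fmap A b xbar in
  let beta := - (dotv df (fmap A b xbar) / enorm df ^+ 2) in
  let x0 := xbar + beta *: (ybar - xbar) in
  let x1 := gmap A b xbar + beta *: (gmap A b ybar - gmap A b xbar) in
  fmap A b x0 != 0 ->
  enorm (fmap A b x1) < enorm (fmap A b x0).
Proof.
move=> df beta x0 x1 fx0.
have -> : x1 = gmap A b x0 by rewrite /x1 gmap_lerp.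
rewrite fmap_gmap /enorm ltr_sqrt ?dotv_gt0 //.
apply: sym_mx_contraction => // [|l /eigenvalue_1submx /heig]; last lra.
by rewrite raddfB /= trmx1 hsym.
Qed.
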